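(* Let $K>0$, let $m_1,m_2\in(0,1]$, and let $f,g:[0,K]\to\mathbb{R}$ be such that $f$ is $m_1$-convex and $g$ is $m_2$-convex on $[0,K]$. Let $0\le a<b\le K$ with $a/m_1\le K$ and $a/m_2\le K$, and assume $f$, $g$ and $fg$ are integrable on $[a,b]$. Then \begin{align*} &\frac{g(b)}{(b-a)^2}\int_a^b (x-a)f(x)\,dx+m_2\frac{g(a/m_2)}{(b-a)^2}\int_a^b (b-x)f(x)\,dx\\ &\quad+\frac{f(b)}{(b-a)^2}\int_a^b (x-a)g(x)\,dx+m_1\frac{f(a/m_1)}{(b-a)^2}\int_a^b (b-x)g(x)\,dx\\ &\le \frac{1}{b-a}\int_a^b f(x)g(x)\,dx+\frac13 f(b)g(b)+\frac{m_1}{6}f\!\left(\frac{a}{m_1}\right)g(b)+\frac{m_2}{6}f(b)\,g\!\left(\frac{a}{m_2}\right)+\frac{m_1m_2}{3}f\!\left(\frac{a}{m_1}\right)g\!\left(\frac{a}{m_2}\right). \end{align*}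
   Context: For $m\in[0,1]$ and $K>0$, a function $h:[0,K]\to\mathbb{R}$ is called $m$-convex if $h(tx+m(1-t)y)\le t\,h(x)+m(1-t)\,h(y)$ for all $x,y\in[0,K]$ and $t\in[0,1]$. *)

From Stdlib Require Import Reals Lra ClassicalEpsilon.
Open Scope R_scope.

Definition m_convex (m K : R) (h : R -> R) : Prop :=
  forall x y t, 0 <= x <= K -> 0 <= y <= K -> 0 <= t <= 1 ->
    h (t * x + m * (1 - t) * y) <= t * h x + m * (1 - t) * h y.

(* The Riemann integral of h over [a,b] as a total function: the (Stdlib)
   Riemann integral when h is Riemann integrable on [a,b], and 0 otherwise.
   (RiemannInt does not depend on the integrability proof, RiemannInt_P5.) *)
Definition Rint (h : R -> R) (a b : R) : R :=
  match excluded_middle_informative (inhabited (Riemann_integrable h a b)) with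
  | left H => RiemannInt (epsilon H (fun _ => True))
  | right _ => 0
  end.

From Coquelicot Require Import Coquelicot.
From Stdlib Require Import Reals Lra ClassicalEpsilon FunctionalExtensionality.
Open Scope R_scope.

(* Write interp a b ya yb for the affine function on [a,b] with values
   ya at a and yb at b.  Taking x := b, y := a/m and t := (x-a)/(b-a) in the
   definition of m-convexity shows that an m-convex f lies below the chord
   A = interp a b (m1 f(a/m1)) (f b) on [a,b]; likewise g lies below
   B = interp a b (m2 g(a/m2)) (g b).  Hence (A - f)(B - g) >= 0, i.e.
   f B + g A <= f g + A B pointwise.  Integrating over [a,b], the left side
   expands into the four weighted integrals of the statement, and the right
   side into the integral of f g plus the explicit integral of a product of
   two affine functions; dividing by b - a gives the theorem.

   The only analytic difficulty is that the weighted integrands (x-a) f(x) and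
   (b-x) f(x) must be Riemann integrable.  We prove in general that the product
   of an integrable function with a 1-Lipschitz function is integrable, by
   uniform approximation with functions which are integrable piecewise
   multiples of f. *)

(* A function uniformly approximable on [a,b] by integrable functions is
   Riemann integrable: the step-function envelope of an eps-approximation
   is widened by a constant of small integral. *)
Lemma Riemann_integrable_uniform_approx (h : R -> R) (a b : R) :
  a <= b ->
  (forall eps : posreal, exists g : R -> R,
     ex_RInt g a b /\ forall x, a <= x <= b -> Rabs (h x - g x) <= eps) ->
  Riemann_integrable h a b.
Proof.
  intros Hab Happrox eps.
  assert (He1 : 0 < eps / (2 * (b - a + 1))).
  { apply Rdiv_lt_0_compat; [apply cond_pos | lra]. }
  set (e1 := mkposreal _ He1).
  destruct (constructive_indefinite_description _ (Happrox e1)) as [g [Ig Hg]].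
  destruct (ex_RInt_Reals_0 _ _ _ Ig e1) as [phi [psi [Hpsi Hint]]].
  exists phi.
  exists (mkStepFun (StepFun_P28 1 psi (mkStepFun (StepFun_P4 a b e1)))).
  rewrite Rmin_left, Rmax_right in Hpsi |- * by lra.
  split.
  - intros t Ht. simpl. unfold fct_cte.
    specialize (Hpsi t Ht). specialize (Hg t Ht). simpl in Hg.
    replace (h t - phi t) with ((h t - g t) + (g t - phi t)) by ring.
    eapply Rle_trans; [apply Rabs_triang | lra].
  - rewrite StepFun_P30, StepFun_P18.
    eapply Rle_lt_trans; [apply Rabs_triang |].
    rewrite Rmult_1_l, (Rabs_pos_eq (_ * (b - a))).
    2: { apply Rmult_le_pos; simpl; lra. }
    simpl in Hint |- *.
    assert (0 < eps) by apply cond_pos.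
    assert (eps / (2 * (b - a + 1)) * (b - a) < eps / 2).
    { apply Rmult_lt_reg_r with (2 * (b - a + 1)); [lra |].
      field_simplify; lra. }
    assert (eps / (2 * (b - a + 1)) <= eps / 2).
    { apply Rmult_le_compat_l; [lra | apply Rinv_le_contravar; lra]. }
    lra.
Qed.

Section LipschitzWeight.

Variables (w f : R -> R) (a b M : R).
Hypothesis w_Lipschitz : forall x y, Rabs (w x - w y) <= Rabs (x - y).
Hypothesis f_int : ex_RInt f a b.
Hypothesis f_bounded : forall x, a <= x <= b -> Rabs (f x) <= M.

(* On [a,u] with u - a <= k d, w f is within d M of a function equal on each
   of at most k consecutive pieces of length <= d to a constant multiple of f;
   induction on k, freezing w at the left end of the last piece. *)
Lemma weighted_staircase_approx (d : R) (k : nat) :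
  0 < d -> forall u, a <= u <= b -> u - a <= INR k * d ->
  exists g : R -> R, ex_RInt g a u /\
    forall x, a <= x <= u -> Rabs (w x * f x - g x) <= d * M.
Proof.
  intros Hd. induction k as [|k IH]; intros u Hu Hk.
  - simpl in Hk. replace u with a by lra.
    exists (fun x => w a * f x). split; [apply ex_RInt_point |].
    intros x Hx. replace x with a by lra.
    rewrite Rminus_diag, Rabs_R0.
    apply Rmult_le_pos; [lra |].
    apply Rle_trans with (Rabs (f a)); [apply Rabs_pos | apply f_bounded; lra].
  - set (v := Rmax a (u - d)).
    assert (Hv : a <= v <= u /\ u - d <= v).
    { unfold v; split; [split |]; [apply Rmax_l | apply Rmax_lub | apply Rmax_r]; lra. }
    assert (Hvk : v - a <= INR k * d).
    { unfold v; apply Rmax_case_strong; intros.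
      - rewrite Rminus_diag. apply Rmult_le_pos; [apply pos_INR | lra].
      - rewrite S_INR in Hk. lra. }
    destruct (IH v ltac:(lra) Hvk) as [g [Ig Hg]].
    exists (fun x => if Rle_dec x v then g x else w v * f x).
    split.
    + apply ex_RInt_Chasles with v.
      * apply ex_RInt_ext with g; [| exact Ig].
        intros x Hx. rewrite Rmin_left, Rmax_right in Hx by lra.
        destruct (Rle_dec x v); [reflexivity | lra].
      * assert (Ifvu : ex_RInt f v u).
        { apply (ex_RInt_Chasles_2 (V := R_CompleteNormedModule) f a); [lra |].
          apply (ex_RInt_Chasles_1 (V := R_CompleteNormedModule) f a u b);
            [lra | exact f_int]. }
        apply ex_RInt_ext with (fun x => w v * f x).
        { intros x Hx. rewrite Rmin_left, Rmax_right in Hx by lra.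
          destruct (Rle_dec x v); [lra | reflexivity]. }
        exact (ex_RInt_scal f v u (w v) Ifvu).
    + intros x Hx. destruct (Rle_dec x v) as [Hxv | Hxv]; [apply Hg; lra |].
      replace (w x * f x - w v * f x) with ((w x - w v) * f x) by ring.
      rewrite Rabs_mult.
      apply Rmult_le_compat; try apply Rabs_pos; [| apply f_bounded; lra].
      eapply Rle_trans; [apply w_Lipschitz | rewrite Rabs_pos_eq; lra].
Qed.

End LipschitzWeight.

Lemma Riemann_integrable_Lipschitz_mult (w f : R -> R) (a b : R) :
  a <= b -> (forall x y, Rabs (w x - w y) <= Rabs (x - y)) ->
  Riemann_integrable f a b -> Riemann_integrable (fun x => w x * f x) a b.
Proof.
  intros Hab Hw If.
  pose proof (ex_RInt_Reals_1 _ _ _ If) as If'.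
  apply Riemann_integrable_uniform_approx; [exact Hab |]. intros eps.
  destruct (ex_RInt_ub f a b If') as [M HM].
  assert (Hbound : forall x, a <= x <= b -> Rabs (f x) <= M).
  { intros x Hx. apply HM. rewrite Rmin_left, Rmax_right; lra. }
  assert (HM0 : 0 <= M).
  { apply Rle_trans with (Rabs (f a)); [apply Rabs_pos | apply Hbound; lra]. }
  assert (Heps : 0 < eps) by apply cond_pos.
  set (d := eps / (M + 1)).
  assert (Hd : 0 < d) by (apply Rdiv_lt_0_compat; lra).
  destruct (INR_unbounded ((b - a) / d)) as [N HN].
  assert (HNd : b - a <= INR N * d).
  { apply Rmult_lt_compat_r with (r := d) in HN; [| exact Hd].
    unfold Rdiv in HN. rewrite Rmult_assoc, Rinv_l in HN; lra. }
  destruct (weighted_staircase_approx w f a b M Hw If' Hbound d N Hd b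
              ltac:(lra) HNd) as [g [Ig Hg]].
  exists g. split; [exact Ig |].
  intros x Hx. apply Rle_trans with (d * M); [apply Hg; exact Hx |].
  assert (d * (M + 1) = eps) by (unfold d; field; lra).
  assert (d * M <= d * (M + 1)) by (apply Rmult_le_compat_l; lra).
  lra.
Qed.

Lemma Riemann_integrable_left_weight (f : R -> R) (a b : R) :
  a <= b -> Riemann_integrable f a b ->
  Riemann_integrable (fun x => (x - a) * f x) a b.
Proof.
  intros Hab If. apply Riemann_integrable_Lipschitz_mult; [exact Hab | | exact If].
  intros x y. right. f_equal. ring.
Qed.

Lemma Riemann_integrable_right_weight (f : R -> R) (a b : R) :
  a <= b -> Riemann_integrable f a b ->
  Riemann_integrable (fun x => (b - x) * f x) a b.
Proof.
  intros Hab If. apply Riemann_integrable_Lipschitz_mult; [exact Hab | | exact If].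
  intros x y. right. rewrite <- Rabs_minus_sym. f_equal. ring.
Qed.

Lemma Rint_eq (h : R -> R) (a b : R) (pr : Riemann_integrable h a b) :
  Rint h a b = RiemannInt pr.
Proof.
  unfold Rint. destruct (excluded_middle_informative _) as [i | n].
  - apply RiemannInt_P5.
  - exfalso. exact (n (inhabits pr)).
Qed.

Lemma Rint_ext (h1 h2 : R -> R) (a b : R) :
  (forall x, h1 x = h2 x) -> Rint h1 a b = Rint h2 a b.
Proof. intros H. f_equal. apply functional_extensionality, H. Qed.

Lemma Rint_plus (h1 h2 : R -> R) (a b : R) :
  a <= b -> Riemann_integrable h1 a b -> Riemann_integrable h2 a b ->
  Rint (fun x => h1 x + h2 x) a b = Rint h1 a b + Rint h2 a b.
Proof.
  intros Hab p1 p2.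
  rewrite (Rint_eq _ _ _ (@Riemann_integrable_plus h1 h2 a b p1 p2)),
    (Rint_eq _ _ _ p1), (Rint_eq _ _ _ p2).
  rewrite (RiemannInt_P18 _ (RiemannInt_P10 1 p1 p2)); [| exact Hab | intros; ring].
  rewrite (RiemannInt_P13 p1 p2). ring.
Qed.

Lemma Rint_scal (h : R -> R) (c a b : R) :
  Riemann_integrable h a b -> Rint (fun x => c * h x) a b = c * Rint h a b.
Proof.
  intros p. rewrite (Rint_eq _ _ _ (Riemann_integrable_scal c p)), (Rint_eq _ _ _ p).
  apply RiemannInt_scal.
Qed.

Lemma Rint_le (h1 h2 : R -> R) (a b : R) :
  a <= b -> Riemann_integrable h1 a b -> Riemann_integrable h2 a b ->
  (forall x, a <= x <= b -> h1 x <= h2 x) -> Rint h1 a b <= Rint h2 a b.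
Proof.
  intros Hab p1 p2 H. rewrite (Rint_eq _ _ _ p1), (Rint_eq _ _ _ p2).
  apply RiemannInt_P19; [exact Hab |]. intros; apply H; lra.
Qed.

Definition interp (a b ya yb x : R) : R :=
  (b - x) / (b - a) * ya + (x - a) / (b - a) * yb.

Lemma m_convex_below_interp (m K a b : R) (h : R -> R) :
  m_convex m K h -> 0 < m -> 0 <= a -> a < b -> b <= K -> a / m <= K ->
  forall x, a <= x <= b -> h x <= interp a b (m * h (a / m)) (h b) x.
Proof.
  intros Hh Hm Ha Hab HbK HaK x Hx.
  set (t := (x - a) / (b - a)).
  assert (Ht : 0 <= t <= 1).
  { unfold t. split; [apply Rdiv_le_0_compat; lra |].
    apply Rmult_le_reg_r with (b - a); [lra |].
    unfold Rdiv. rewrite Rmult_assoc, Rinv_l; lra. }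
  assert (Ham : 0 <= a / m <= K) by (split; [apply Rdiv_le_0_compat |]; lra).
  pose proof (Hh b (a / m) t ltac:(lra) Ham Ht) as Hconv.
  replace (t * b + m * (1 - t) * (a / m)) with x in Hconv by (unfold t; field; lra).
  unfold interp. replace ((b - x) / (b - a)) with (1 - t) by (unfold t; field; lra).
  fold t. lra.
Qed.

Lemma mult_interp_split (f : R -> R) (a b ya yb x : R) : a < b ->
  f x * interp a b ya yb x
  = yb / (b - a) * ((x - a) * f x) + ya / (b - a) * ((b - x) * f x).
Proof. intros Hab. unfold interp. field. lra. Qed.

Lemma Riemann_integrable_mult_interp (f : R -> R) (a b ya yb : R) :
  a < b -> Riemann_integrable f a b ->
  Riemann_integrable (fun x => f x * interp a b ya yb x) a b.
Proof.
  intros Hab If.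
  replace (fun x => f x * interp a b ya yb x)
    with (fun x => yb / (b - a) * ((x - a) * f x) + ya / (b - a) * ((b - x) * f x))
    by (apply functional_extensionality; intros x; symmetry; apply mult_interp_split, Hab).
  apply Riemann_integrable_plus; apply Riemann_integrable_scal;
    [apply Riemann_integrable_left_weight | apply Riemann_integrable_right_weight];
    lra || exact If.
Qed.

Lemma Rint_mult_interp (f : R -> R) (a b ya yb : R) :
  a < b -> Riemann_integrable f a b ->
  Rint (fun x => f x * interp a b ya yb x) a b
  = yb / (b - a) * Rint (fun x => (x - a) * f x) a b
    + ya / (b - a) * Rint (fun x => (b - x) * f x) a b.
Proof.
  intros Hab If.
  pose proof (Riemann_integrable_left_weight f a b ltac:(lra) If) as Il.
  pose proof (Riemann_integrable_right_weight f a b ltac:(lra) If) as Ir.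
  rewrite (Rint_ext _ _ a b (fun x => mult_interp_split f a b ya yb x Hab)).
  rewrite Rint_plus by (lra || apply Riemann_integrable_scal; assumption).
  rewrite !Rint_scal by assumption. reflexivity.
Qed.

Lemma Rint_interp_mult (a b u0 u1 v0 v1 : R) : a < b ->
  Rint (fun x => interp a b u0 u1 x * interp a b v0 v1 x) a b
  = (b - a) * (u1 * v1 / 3 + (u1 * v0 + u0 * v1) / 6 + u0 * v0 / 3).
Proof.
  intros Hab.
  assert (Hcont : forall x, continuity_pt
            (fun x => interp a b u0 u1 x * interp a b v0 v1 x) x).
  { intros x. unfold interp. reg. }
  pose proof (continuity_implies_RiemannInt (Rlt_le _ _ Hab) (fun x _ => Hcont x)) as Iprod.
  rewrite (Rint_eq _ _ _ Iprod), <- RInt_Reals. apply is_RInt_unique.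
  set (L := b - a).
  set (P := fun x => L * (u1 * v1 * ((x - a) / L) ^ 3 / 3
      + (u1 * v0 + u0 * v1) * (((x - a) / L) ^ 2 / 2 - ((x - a) / L) ^ 3 / 3)
      - u0 * v0 * ((b - x) / L) ^ 3 / 3)).
  replace (L * _) with (P b - P a) by (unfold P, L; field; lra).
  apply (is_RInt_derive P).
  - intros x _. unfold P. auto_derive; [exact I | unfold interp, L; field; lra].
  - intros x _. apply continuity_pt_filterlim, Hcont.
Qed.

(* Pointwise form of (X - x)(Y - y) >= 0, the heart of the inequality. *)
Lemma cross_product_le (x y X Y : R) :
  x <= X -> y <= Y -> x * Y + y * X <= x * y + X * Y.
Proof. intros Hx Hy. nra. Qed.

Theorem theorem4 (K m1 m2 a b : R) (f g : R -> R)
  (HK : 0 < K)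
  (Hm1 : 0 < m1 <= 1) (Hm2 : 0 < m2 <= 1)
  (Hf : m_convex m1 K f) (Hg : m_convex m2 K g)
  (Ha : 0 <= a) (Hab : a < b) (HbK : b <= K)
  (Ha1 : a / m1 <= K) (Ha2 : a / m2 <= K)
  (If : Riemann_integrable f a b) (Ig : Riemann_integrable g a b)
  (Ifg : Riemann_integrable (fun x => f x * g x) a b) :
  g b / (b - a) ^ 2 * Rint (fun x => (x - a) * f x) a b
  + m2 * g (a / m2) / (b - a) ^ 2 * Rint (fun x => (b - x) * f x) a b
  + f b / (b - a) ^ 2 * Rint (fun x => (x - a) * g x) a b
  + m1 * f (a / m1) / (b - a) ^ 2 * Rint (fun x => (b - x) * g x) a b
  <= 1 / (b - a) * Rint (fun x => f x * g x) a b
     + 1 / 3 * f b * g b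
     + m1 / 6 * f (a / m1) * g b
     + m2 / 6 * f b * g (a / m2)
     + m1 * m2 / 3 * f (a / m1) * g (a / m2).
Proof.
  set (A := interp a b (m1 * f (a / m1)) (f b)).
  set (B := interp a b (m2 * g (a / m2)) (g b)).
  assert (HA := m_convex_below_interp m1 K a b f Hf ltac:(lra) Ha Hab HbK Ha1).
  assert (HB := m_convex_below_interp m2 K a b g Hg ltac:(lra) Ha Hab HbK Ha2).
  assert (IfB := Riemann_integrable_mult_interp f a b (m2 * g (a / m2)) (g b) Hab If).
  assert (IgA := Riemann_integrable_mult_interp g a b (m1 * f (a / m1)) (f b) Hab Ig).
  assert (IAB : Riemann_integrable (fun x => A x * B x) a b).
  { apply continuity_implies_RiemannInt; [lra |]. intros x _. unfold A, B, interp. reg. }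
  assert (Hint : Rint (fun x => f x * B x + g x * A x) a b
                 <= Rint (fun x => f x * g x + A x * B x) a b).
  { apply Rint_le; [lra | apply Riemann_integrable_plus; assumption
                  | apply Riemann_integrable_plus; assumption |].
    intros x Hx. apply cross_product_le; [apply HA | apply HB]; exact Hx. }
  rewrite !Rint_plus in Hint by (lra || assumption).
  unfold A, B in Hint.
  rewrite !Rint_mult_interp, Rint_interp_mult in Hint by assumption.
  apply Rmult_le_compat_l with (r := / (b - a)) in Hint;
    [| left; apply Rinv_0_lt_compat; lra].
  match type of Hint with ?l <= ?r =>
    apply Rle_trans with l; [right; field; lra |];
    apply Rle_trans with r; [exact Hint | right; field; lra]
  end.
Qed.
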